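(* Let $k$ be a field and for $n\ge1$ let $B_n=k[x,y]\big[(x-1)/(x^ny-1)\big]\subset k(x,y)$, where $k[x,y]$ is a polynomial ring in two variables. Then $B_n$ is degree-rigid for each $n\ge 1$, i.e. every non-negative degree function $\delta:B_n\to\mathbb{N}\cup\{-\infty\}$ satisfies $\delta(f)=0$ for all nonzero $f\in B_n$.
   Context: A degree function on an integral domain $R$ is a map $\deg:R\to\mathbb{Z}\cup\{-\infty\}$ such that $\deg r=-\infty$ iff $r=0$, $\deg(rs)=\deg r+\deg s$, and $\deg(r+s)\le\max\{\deg r,\deg s\}$; it is non-negative if its values lie in $\mathbb{N}\cup\{-\infty\}$. $R$ is degree-rigid if every non-negative degree function on $R$ is trivial (zero on all nonzero elements). *)

From HB Require Import structures.
From mathcomp Require Import all_boot all_order all_algebra.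
Set Implicit Arguments. Unset Strict Implicit. Unset Printing Implicit Defensive.
Import Order.TTheory GRing.Theory Num.Theory.
Local Open Scope ring_scope.

(* k[x,y] is modelled as {poly {poly k}}: x = 'X%:P (inner variable),
   y = 'X (outer variable).  k(x,y) is its fraction field. *)

Definition varx (k : fieldType) : {poly {poly k}} := ('X)%:P.
Definition vary (k : fieldType) : {poly {poly k}} := 'X.

Definition tgen (k : fieldType) (n : nat) : {fraction {poly {poly k}}} :=
  FracField.tofrac (varx k - 1) /
  FracField.tofrac (varx k ^+ n * vary k - 1).

Definition inBn (k : fieldType) (n : nat) (z : {fraction {poly {poly k}}}) : Prop :=
  exists P : {poly {poly {poly k}}},
    z = (map_poly (fun c : {poly {poly k}} => FracField.tofrac c) P).[tgen k n].

(* N ∪ {-oo} encoded as option nat, None = -oo *)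
Definition odeg_add (a b : option nat) : option nat :=
  match a, b with Some m, Some n => Some (m + n)%N | _, _ => None end.
Definition odeg_le (a b : option nat) : Prop :=
  match a, b with
  | None, _ => True
  | Some _, None => False
  | Some m, Some n => (m <= n)%N
  end.
Definition odeg_max (a b : option nat) : option nat :=
  match a, b with
  | None, _ => b
  | _, None => a
  | Some m, Some n => Some (maxn m n)
  end.

Definition nonneg_degree_fun (R : idomainType) (S : R -> Prop)
    (d : R -> option nat) : Prop :=
  [/\ forall r, S r -> (d r = None <-> r = 0),
      forall r s, S r -> S s -> d (r * s) = odeg_add (d r) (d s)
    & forall r s, S r -> S s -> odeg_le (d (r + s)) (odeg_max (d r) (d s))].

Definition degree_rigid (R : idomainType) (S : R -> Prop) : Prop :=
  forall d : R -> option nat, nonneg_degree_fun S d ->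
    forall r, S r -> r <> 0 -> d r = Some 0%N.

From HB Require Import structures.
From mathcomp Require Import all_boot all_order all_algebra.
From mathcomp Require Import ring zify.
Set Implicit Arguments. Unset Strict Implicit. Unset Printing Implicit Defensive.
Import Order.TTheory GRing.Theory Num.Theory.
Local Open Scope ring_scope.

(* Units have degree 0, and subtracting 1 does not change the degree.  Writing
   t = (x - 1)/(x^n y - 1), the relation t (x^n y - 1) = x - 1 then gives
   deg t + n deg x + deg y = deg x, so deg t = deg y = 0 as n >= 1; and
   x (1 - t x^(n-1) y) = 1 - t, whose right-hand side has the degree of t,
   forces deg x = 0.  As B_n is generated by units, x, y and t, and elements of
   degree 0 are closed under sums and products, every nonzero element has
   degree 0. *)

Definition subring_pred (R : idomainType) (S : R -> Prop) : Prop :=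
  [/\ S 1, forall a, S a -> S (- a),
      forall a b, S a -> S b -> S (a + b)
    & forall a b, S a -> S b -> S (a * b)].

Section NatDegree.
Variables (R : idomainType) (S : R -> Prop).
Hypothesis subS : subring_pred S.
Variable d : R -> option nat.
Hypothesis hd : nonneg_degree_fun S d.

(* The degree as a natural number, with the junk value 0 at z = 0. *)
Definition degn (z : R) : nat := odflt 0%N (d z).

Lemma memS1 : S 1. Proof. by case: subS. Qed.
Lemma memSN a : S a -> S (- a). Proof. by case: subS => _ + _ _; apply. Qed.
Lemma memSD a b : S a -> S b -> S (a + b). Proof. by case: subS => _ _ + _; apply. Qed.
Lemma memSM a b : S a -> S b -> S (a * b). Proof. by case: subS => _ _ _; apply. Qed.

Lemma memS0 : S 0.
Proof. by rewrite -(subrr 1); apply/memSD/memSN/memS1; apply: memS1. Qed.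

Lemma memSX a j : S a -> S (a ^+ j).
Proof.
move=> Sa; elim: j => [|j IHj]; first exact: memS1.
by rewrite exprS; apply: memSM.
Qed.

Lemma degn_some z : S z -> z != 0 -> d z = Some (degn z).
Proof.
case: hd => d_none _ _ Sz /eqP z_neq0; rewrite /degn.
by case Edz: (d z) => //; move/(d_none _ Sz): Edz.
Qed.

Lemma degn0 : degn 0 = 0%N.
Proof. by case: hd => d_none _ _; rewrite /degn (proj2 (d_none _ memS0)). Qed.

Lemma degnM a b : S a -> S b -> a != 0 -> b != 0 ->
  degn (a * b) = (degn a + degn b)%N.
Proof.
move=> Sa Sb a_neq0 b_neq0; case: hd => _ dM _.
by rewrite {1}/degn dM // (degn_some Sa a_neq0) (degn_some Sb b_neq0).
Qed.

Lemma degnD_le a b : S a -> S b -> (degn (a + b) <= maxn (degn a) (degn b))%N.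
Proof.
case: hd => _ _ dD Sa Sb; have := dD _ _ Sa Sb; rewrite /degn.
by case: (d (a + b)) (d a) (d b) => [x|] [y|] [z|] //=; lia.
Qed.

Lemma degn1 : degn 1 = 0%N.
Proof.
by have := degnM memS1 memS1 (oner_neq0 R) (oner_neq0 R); rewrite mulr1; lia.
Qed.

Lemma degn_unit a b : S a -> S b -> a * b = 1 -> degn a = 0%N.
Proof.
move=> Sa Sb ab1.
have [a_neq0 b_neq0] : a != 0 /\ b != 0.
  by apply/andP; rewrite -negb_or -mulf_eq0 ab1 oner_neq0.
by have := degnM Sa Sb a_neq0 b_neq0; rewrite ab1 degn1; lia.
Qed.

Lemma degnN a : S a -> degn (- a) = degn a.
Proof.
move=> Sa; have [->|a_neq0] := eqVneq a 0; first by rewrite oppr0.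
have SN1 : S (-1) := memSN memS1.
have degnN1 : degn (-1) = 0%N by apply: (degn_unit SN1 SN1); rewrite mulrNN mulr1.
by rewrite -mulN1r degnM ?degnN1 ?oppr_eq0 ?oner_neq0.
Qed.

Lemma degnX a j : S a -> degn (a ^+ j) = (j * degn a)%N.
Proof.
move=> Sa; have [->|a_neq0] := eqVneq a 0.
  by case: j => [|j]; rewrite ?expr0 ?degn1 // expr0n degn0 muln0.
elim: j => [|j IHj]; first by rewrite expr0 degn1.
by rewrite exprS degnM ?IHj ?mulSn //; [exact: memSX | exact: expf_neq0].
Qed.

(* As 1 and -1 have degree 0, each of a - 1 and a = (a - 1) + 1 has degree at
   most that of the other. *)
Lemma degnB1 a : S a -> degn (a - 1) = degn a.
Proof.
move=> Sa; have SN1 : S (-1) := memSN memS1.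
have le_sub := degnD_le Sa SN1; rewrite (degnN memS1) degn1 maxn0 in le_sub.
have := degnD_le (memSD Sa SN1) memS1; rewrite subrK degn1 maxn0.
by move=> le_add; apply/eqP; rewrite eqn_leq le_sub le_add.
Qed.

Lemma degn_eq0D a b : S a -> S b ->
  degn a = 0%N -> degn b = 0%N -> degn (a + b) = 0%N.
Proof. by move=> Sa Sb da db; have := degnD_le Sa Sb; rewrite da db; lia. Qed.

Lemma degn_eq0M a b : S a -> S b ->
  degn a = 0%N -> degn b = 0%N -> degn (a * b) = 0%N.
Proof.
move=> Sa Sb da db; have [->|a_neq0] := eqVneq a 0; first by rewrite mul0r degn0.
have [->|b_neq0] := eqVneq b 0; first by rewrite mulr0 degn0.
by rewrite degnM // da db.
Qed.

End NatDegree.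

Section Bn.
Variables (k : fieldType) (n : nat).
Local Notation R := {poly {poly k}}.
Local Notation tf := (@FracField.tofrac R).
Local Notation Bn := (@inBn k n).

Lemma inBn_tofrac c : Bn (tf c).
Proof. by exists c%:P; rewrite map_polyC hornerC. Qed.

Lemma inBn_tgen : Bn (tgen k n).
Proof. by exists 'X; rewrite map_polyX hornerX. Qed.

Lemma inBn_subring : subring_pred Bn.
Proof.
split; first by rewrite -tofrac1; apply: inBn_tofrac.
- by move=> _ [P ->]; exists (- P); rewrite (rmorphN (map_poly tf)) hornerN.
- by move=> _ _ [P ->] [Q ->]; exists (P + Q); rewrite (rmorphD (map_poly tf)) hornerD.
- by move=> _ _ [P ->] [Q ->]; exists (P * Q); rewrite (rmorphM (map_poly tf)) hornerM.
Qed.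

Lemma inBn_ind (P : {fraction R} -> Prop) :
  P 0 ->
  (forall a b, Bn a -> Bn b -> P a -> P b -> P (a + b)) ->
  (forall a b, Bn a -> Bn b -> P a -> P b -> P (a * b)) ->
  (forall c : k, P (tf c%:P%:P)) ->
  P (tf (varx k)) -> P (tf (vary k)) -> P (tgen k n) ->
  forall z, Bn z -> P z.
Proof.
move=> P0 PD PM Pconst Px Py Pt.
have [_ _ _ BnM] := inBn_subring.
have BnC c : Bn (tf c) := inBn_tofrac c.
have PMC a b : P (tf a) -> P (tf b) -> P (tf a * tf b) by apply: PM.
have P_kx (a : {poly k}) : P (tf a%:P).
  elim/poly_ind: a => [|a c IHa]; first by rewrite polyC0 tofrac0.
  rewrite polyCD polyCM tofracD.
  by apply: PD => //; rewrite tofracM; apply: PMC.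
have P_kxy (c : R) : P (tf c).
  elim/poly_ind: c => [|c a IHc]; first by rewrite tofrac0.
  rewrite tofracD.
  by apply: PD => //; rewrite tofracM; apply: PMC.
move=> _ [Q ->]; elim/poly_ind: Q => [|Q c IHQ]; first by rewrite rmorph0 horner0.
have BnQ : Bn (map_poly tf Q).[tgen k n] by exists Q.
rewrite (rmorphD (map_poly tf)) (rmorphM (map_poly tf)) /= map_polyX map_polyC.
have Bnt := inBn_tgen.
rewrite hornerMXaddC; apply: PD; [exact: BnM | exact: BnC | exact: PM | exact: P_kxy].
Qed.

End Bn.

Section Generators.
Variables (k : fieldType) (m : nat).
Local Notation R := {poly {poly k}}.
Local Notation tf := (@FracField.tofrac R).
Local Notation X := (tf (varx k)).
Local Notation Y := (tf (vary k)).
Local Notation t := (tgen k m.+1).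

Lemma varx_neq0 : X != 0.
Proof. by rewrite tofrac_eq0 /varx polyC_eq0 polyX_eq0. Qed.

Lemma vary_neq0 : Y != 0.
Proof. by rewrite tofrac_eq0 /vary polyX_eq0. Qed.

Lemma varx_sub1_neq0 : X - 1 != 0.
Proof.
rewrite -tofrac1 -tofracB tofrac_eq0 /varx -polyC1 -polyCB polyC_eq0.
by rewrite -polyC1 polyXsubC_eq0.
Qed.

Lemma varxny_sub1_neq0 : X ^+ m.+1 * Y - 1 != 0.
Proof.
rewrite -tofracXn -tofracM -tofrac1 -tofracB tofrac_eq0.
apply/eqP => /(congr1 (horner^~ 0)) /eqP.
by rewrite /varx /vary !hornerE oppr_eq0 oner_eq0.
Qed.

Lemma tgen_mulE : t * (X ^+ m.+1 * Y - 1) = X - 1.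
Proof.
rewrite /tgen -tofracXn -tofracM -tofrac1 -!tofracB divfK // tofracB tofracM.
by rewrite tofracXn tofrac1 varxny_sub1_neq0.
Qed.

Lemma tgen_neq0 : t != 0.
Proof.
by apply: contra_neq varx_sub1_neq0 => t0; rewrite -tgen_mulE t0 mul0r.
Qed.

Lemma tgen_neq1 : 1 - t != 0.
Proof.
rewrite subr_eq0 eq_sym; apply: contra_neq varx_neq0 => t1.
have := tgen_mulE; rewrite t1 mul1r => /eqP; rewrite (can_eq (subrK 1)).
rewrite -tofracXn -tofracM tofrac_eq => /eqP /(congr1 (horner^~ 0)).
by rewrite /varx /vary !hornerE => x0; rewrite -x0 polyC0 tofrac0.
Qed.

Lemma varx_mul_tgenE : X * (1 - t * X ^+ m * Y) = 1 - t.
Proof.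
have := tgen_mulE; rewrite exprS => tE.
transitivity (X - (t * (X * X ^+ m * Y - 1) + t)); first by ring.
by rewrite tE; ring.
Qed.

Lemma degn_generators (d : {fraction R} -> option nat) :
  nonneg_degree_fun (@inBn k m.+1) d ->
  [/\ degn d X = 0%N, degn d Y = 0%N & degn d t = 0%N].
Proof.
move=> hd; have subS := @inBn_subring k m.+1; have [S1 SN SD SM] := subS.
have SX := inBn_tofrac m.+1 (varx k); have SY := inBn_tofrac m.+1 (vary k).
have St := inBn_tgen k m.+1.
have SXn j : inBn m.+1 (X ^+ j) := memSX subS j SX.
have SXnY : inBn m.+1 (X ^+ m.+1 * Y) := SM _ _ (SXn _) SY.
have deg_tE : (degn d t + (m.+1 * degn d X + degn d Y) = degn d X)%N.
  have := congr1 (degn d) tgen_mulE.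
  rewrite (degnM hd St (SD _ _ SXnY (SN _ S1)) tgen_neq0 varxny_sub1_neq0).
  rewrite (degnB1 subS hd SXnY) (degnB1 subS hd SX).
  by rewrite (degnM hd (SXn _) SY (expf_neq0 _ varx_neq0) vary_neq0) (degnX subS hd).
have [dt0 dY0] : degn d t = 0%N /\ degn d Y = 0%N by lia.
split=> //.
have Su : inBn m.+1 (1 - t * X ^+ m * Y) := SD _ _ S1 (SN _ (SM _ _ (SM _ _ St (SXn m)) SY)).
have u_neq0 : 1 - t * X ^+ m * Y != 0.
  by apply: contra_neq tgen_neq1 => u0; rewrite -varx_mul_tgenE u0 mulr0.
have := congr1 (degn d) varx_mul_tgenE.
rewrite (degnM hd SX Su varx_neq0 u_neq0) -[1 - t]opprB.
by rewrite (degnN subS hd (SD _ _ St (SN _ S1))) (degnB1 subS hd St) dt0; lia.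
Qed.

End Generators.

Unset Implicit Arguments.
Theorem theorem4p2 (k : fieldType) (n : nat) (hn : (1 <= n)%N) :
  degree_rigid (@inBn k n).
Proof.
case: n hn => [//|m] _ d hd z Sz /eqP z_neq0.
have subS := @inBn_subring k m.+1.
rewrite (degn_some hd Sz z_neq0); congr Some.
have [dX dY dt] := degn_generators hd.
apply: (inBn_ind (P := fun z => degn d z = 0%N)) Sz => //.
- exact (degn0 subS hd).
- by move=> a b; apply: degn_eq0D.
- by move=> a b; apply: degn_eq0M.
- move=> c; have [->|c_neq0] := eqVneq c 0; first by rewrite !polyC0 tofrac0 (degn0 subS hd).
  apply: (degn_unit subS hd (inBn_tofrac _ _) (inBn_tofrac _ (c^-1)%:P%:P)).
  by rewrite -tofracM -2!polyCM mulfV ?polyC1 ?tofrac1.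
Qed.
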